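(* In the setting described in the context, define $\mathbf E\in\mathbb{R}^{n\times n}$ by $[\mathbf E]_{ij}=\frac1{2n_{s(i)}}\big([\boldsymbol\beta^{r(i)}_1(x_i)]_j-[\boldsymbol\beta^{r(i)}_0(x_i)]_j\big)$ for $j\ne i$ and $[\mathbf E]_{ii}=0$, and define $\mathbf C\in\mathbb{R}^{n\times n}$ by $[\mathbf C]_{ii}=\frac1{2n_{s(i)}}\big(\frac{a_i}{w_i}-\frac{1-a_i}{1-w_i}\big)$ and, for $j\ne i$, $[\mathbf C]_{ij}=\frac1{2n_{s(i)}}\big[(1-\frac{a_i}{w_i})[\boldsymbol\beta^{r(i)}_1(x_i)]_j+(\frac{1-a_i}{1-w_i}-1)[\boldsymbol\beta^{r(i)}_0(x_i)]_j\big]$. Then the cross-fitted plug-in estimator satisfies $\psi_n=\sum_{i,j\in[n]}[\mathbf E]_{ij}\Lambda_{x_i,y_j}$ and the cross-fitted one-step estimator satisfies $\bar\psi_n=\sum_{i,j\in[n]}[\mathbf C]_{ij}\Lambda_{x_i,y_j}$.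
   Context: $k,\ell$ kernels on $\mathcal{X},\mathcal{Y}$ with feature maps $K_x,L_y$; $\mathcal{H}$ the tensor-product RKHS with feature map $\Lambda_{x,y}=K_x\otimes L_y$. Data $z_i=(x_i,a_i,y_i)\in\mathcal{X}\times\{0,1\}\times\mathcal{Y}$, $i\in[n]$; $[n]$ is partitioned into folds $\mathcal{I}^1,\mathcal{I}^2$ of sizes $n_1,n_2$; $s(i)$ is the fold containing $i$ and $r(i)=3-s(i)$. For $r\in\{1,2\}$: propensity estimates $\pi^r_n:\mathcal{X}\to(0,1)$ and outcome models $\theta^r_{n,a}(x)=\sum_j[\boldsymbol\beta^r_a(x)]_j\Lambda_{x,y_j}$, $a\in\{0,1\}$, with $\boldsymbol\beta^r_a(x)\in\mathbb{R}^n$ and $[\boldsymbol\beta^r_a(x)]_j=0$ whenever $j\notin\mathcal{I}^r$ or $a_j\ne a$. $w_i=\pi_n^{r(i)}(x_i)$. With $s=3-r$ and $P_n^s$ the empirical distribution of $\{z_i:i\in\mathcal{I}^s\}$: the fold plug-in is $\psi^r_n=\mathbb{E}_{P_n^s}[\theta^r_{n,1}(X)-\theta^r_{n,0}(X)]$, the cross-fitted plug-in is $\psi_n=\frac12\sum_{r=1}^2\psi^r_n$; $\phi^r_n(x,a,y)=(\frac{a}{\pi^r_n(x)}-\frac{1-a}{1-\pi^r_n(x)})(\Lambda_{x,y}-\theta^r_{n,a}(x))+\theta^r_{n,1}(x)-\theta^r_{n,0}(x)-\psi^r_n$, and the cross-fitted one-step estimator is $\bar\psi_n=\frac12\sum_{r=1}^2(\psi^r_n+\mathbb{E}_{P_n^s}[\phi^r_n(Z)])$.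 *)

From HB Require Import structures.
From mathcomp Require Import all_boot all_order all_algebra.
Set Implicit Arguments. Unset Strict Implicit. Unset Printing Implicit Defensive.
Import Order.TTheory GRing.Theory Num.Theory.
Local Open Scope ring_scope.

(* Conventions:
   - folds are labelled by bool: [true] = I^1, [false] = I^2;
     [s i] is the fold containing i, and the "other" fold r(i) is [~~ s i].
   - H is an abstract R-module (the tensor-product RKHS is a special case);
     Lam x y plays the role of the feature map Lambda_{x,y}.
   - treatments a_i are booleans, cast to R as (a i)%:R.
   - beta r b z : 'I_n -> R is the coefficient vector beta^r_b(z). *)

Section CrossFit.
Variables (R : realFieldType) (H : lmodType R) (X Y : Type) (n : nat).
Variables (Lam : X -> Y -> H) (x : 'I_n -> X) (a : 'I_n -> bool)
  (y : 'I_n -> Y) (s : 'I_n -> bool) (pi : bool -> X -> R)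
  (beta : bool -> bool -> X -> 'I_n -> R).

Definition nfold (r : bool) : nat := #|[set i | s i == r]|.

Definition theta (r b : bool) (z : X) : H :=
  \sum_(j < n) beta r b z j *: Lam z (y j).

Definition Pn (r : bool) (f : 'I_n -> H) : H :=
  (nfold r)%:R^-1 *: \sum_(i < n | s i == r) f i.

Definition psi_fold (r : bool) : H :=
  Pn (~~ r) (fun i => theta r true (x i) - theta r false (x i)).

Definition psi_cf : H := 2^-1 *: (psi_fold true + psi_fold false).

Definition ipw (r b : bool) (z : X) : R :=
  b%:R / pi r z - (1 - b%:R) / (1 - pi r z).

Definition phi (r : bool) (z : X) (b : bool) (v : Y) : H :=
  ipw r b z *: (Lam z v - theta r b z)
  + theta r true z - theta r false z - psi_fold r.

Definition psi_os : H :=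
  2^-1 *: ((psi_fold true + Pn false (fun i => phi true (x i) (a i) (y i)))
         + (psi_fold false + Pn true (fun i => phi false (x i) (a i) (y i)))).

Definition wt (i : 'I_n) : R := pi (~~ s i) (x i).

Definition Emx : 'M[R]_n := \matrix_(i, j)
  if i == j then 0 else
  (2 * (nfold (s i))%:R)^-1 *
    (beta (~~ s i) true (x i) j - beta (~~ s i) false (x i) j).

Definition Cmx : 'M[R]_n := \matrix_(i, j)
  if i == j then
    (2 * (nfold (s i))%:R)^-1 *
      ((a i)%:R / wt i - (1 - (a i)%:R) / (1 - wt i))
  else
    (2 * (nfold (s i))%:R)^-1 *
      ((1 - (a i)%:R / wt i) * beta (~~ s i) true (x i) j
       + ((1 - (a i)%:R) / (1 - wt i) - 1) * beta (~~ s i) false (x i) j).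

End CrossFit.

From HB Require Import structures.
From mathcomp Require Import all_boot all_order all_algebra.
From mathcomp Require Import ring.
Import Order.TTheory GRing.Theory Num.Theory.
Local Open Scope ring_scope.

(* Merging the two
   cross-fitted halves weights observation i by 1/(2 n_{s(i)}), and every
   term is a linear combination of the features Lambda_{x_i, y_j}: the
   outcome model contributes the coefficients beta^{r(i)}(x_i), which vanish
   at j = i because beta^{r(i)} is supported on fold r(i), so the diagonal
   only receives the inverse-propensity weight of the observed outcome. *)

Section RowSums.
Variables (R : pzRingType) (H : lmodType R) (n : nat).

Lemma sum_if_diag (i : 'I_n) (d : R) (K : 'I_n -> R) (L : 'I_n -> H) :
  K i = 0 ->
  \sum_j (if i == j then d else K j) *: L j = d *: L i + \sum_j K j *: L j.
Proof.
move=> Ki0; rewrite (bigD1 i) //= eqxx [X in _ = _ + X](bigD1 i) //= Ki0.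
rewrite scale0r add0r; congr (_ + _); apply: eq_bigr => j.
by rewrite eq_sym => /negbTE ->.
Qed.

End RowSums.

Definition fold_weight {R : realFieldType} {n : nat} (s : 'I_n -> bool)
  (i : 'I_n) : R := (2 * (nfold s (s i))%:R)^-1.

Section FoldAverages.
Variables (R : realFieldType) (H : lmodType R) (n : nat) (s : 'I_n -> bool).

Lemma Pn_subr (r : bool) (f : 'I_n -> H) (v : H) : (0 < nfold s r)%N ->
  Pn s r (fun i => f i - v) = Pn s r f - v.
Proof.
move=> nfold_gt0; rewrite /Pn sumrB scalerBr; congr (_ - _).
have -> : \sum_(i < n | s i == r) v = \sum_(i in [set i | s i == r]) v.
  by apply: eq_bigl => i; rewrite inE.
rewrite sumr_const -scaler_nat scalerA mulVf ?scale1r //.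
by rewrite pnatr_eq0 -lt0n.
Qed.

Lemma cross_fit_average (F : bool -> 'I_n -> H) :
  2^-1 *: (Pn s false (F true) + Pn s true (F false)) =
  \sum_i fold_weight s i *: F (~~ s i) i.
Proof.
have PnE r f :
    Pn s r f = \sum_i (if s i == r then (nfold s r)%:R^-1 *: f i else 0).
  by rewrite /Pn scaler_sumr big_mkcond.
rewrite !PnE -big_split scaler_sumr; apply: eq_bigr => i _.
rewrite /fold_weight invfM -scalerA.
by case: (s i); rewrite /= ?add0r ?addr0.
Qed.

End FoldAverages.

Section Estimators.
Variables (R : realFieldType) (H : lmodType R) (X Y : Type) (n : nat).
Variables (Lam : X -> Y -> H) (x : 'I_n -> X) (a : 'I_n -> bool)
  (y : 'I_n -> Y) (s : 'I_n -> bool) (pi : bool -> X -> R)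
  (beta : bool -> bool -> X -> 'I_n -> R).

Lemma theta_subE (r : bool) (z : X) :
  theta Lam y beta r true z - theta Lam y beta r false z =
  \sum_j (beta r true z j - beta r false z j) *: Lam z (y j).
Proof. by rewrite /theta -sumrB; apply: eq_bigr => j _; rewrite scalerBl. Qed.

Lemma ipw_augmented_thetaE (r b : bool) (z : X) (v : Y) :
  ipw pi r b z *: (Lam z v - theta Lam y beta r b z)
    + theta Lam y beta r true z - theta Lam y beta r false z =
  ipw pi r b z *: Lam z v
    + \sum_j ((1 - b%:R / pi r z) * beta r true z j
              + ((1 - b%:R) / (1 - pi r z) - 1) * beta r false z j)
             *: Lam z (y j).
Proof.
rewrite scalerBr -addrA theta_subE /theta -addrA; congr (_ + _).
rewrite scaler_sumr -sumrN -big_split /=; apply: eq_bigr => j _.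
rewrite scalerA -scaleNr -scalerDl; congr (_ *: _).
by rewrite /ipw; case: b => /=; ring.
Qed.

Hypothesis beta_fold_support :
  forall (r b : bool) (z : X) (j : 'I_n), s j != r -> beta r b z j = 0.

Let beta_own_fold (b : bool) (z : X) (i : 'I_n) : beta (~~ s i) b z i = 0.
Proof. by apply: beta_fold_support; case: (s i). Qed.

Lemma Emx_row_sum (i : 'I_n) :
  \sum_j Emx x s beta i j *: Lam (x i) (y j) =
  fold_weight s i *: (theta Lam y beta (~~ s i) true (x i)
                      - theta Lam y beta (~~ s i) false (x i)).
Proof.
under eq_bigr do rewrite mxE.
rewrite sum_if_diag; last by rewrite !beta_own_fold subrr mulr0.
rewrite scale0r add0r theta_subE scaler_sumr.
by apply: eq_bigr => j _; rewrite scalerA.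
Qed.

Lemma Cmx_row_sum (i : 'I_n) :
  \sum_j Cmx x a s pi beta i j *: Lam (x i) (y j) =
  fold_weight s i *:
    (ipw pi (~~ s i) (a i) (x i) *:
       (Lam (x i) (y i) - theta Lam y beta (~~ s i) (a i) (x i))
     + theta Lam y beta (~~ s i) true (x i)
     - theta Lam y beta (~~ s i) false (x i)).
Proof.
under eq_bigr do rewrite mxE.
rewrite sum_if_diag; last by rewrite !beta_own_fold !mulr0 addr0 mulr0.
rewrite ipw_augmented_thetaE scalerDr scalerA scaler_sumr; congr (_ + _).
by apply: eq_bigr => j _; rewrite scalerA.
Qed.

Lemma psi_cfE :
  psi_cf Lam x y s beta =
  \sum_i \sum_j Emx x s beta i j *: Lam (x i) (y j).
Proof.
rewrite /psi_cf /psi_fold (@cross_fit_average _ _ _ s (fun r i =>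
  theta Lam y beta r true (x i) - theta Lam y beta r false (x i))).
by apply: eq_bigr => i _; rewrite Emx_row_sum.
Qed.

Hypothesis nfold_gt0 : forall r : bool, (0 < nfold s r)%N.

Lemma one_step_foldE (r : bool) :
  psi_fold Lam x y s beta r
    + Pn s (~~ r) (fun i => phi Lam x y s pi beta r (x i) (a i) (y i)) =
  Pn s (~~ r) (fun i =>
    ipw pi r (a i) (x i) *: (Lam (x i) (y i) - theta Lam y beta r (a i) (x i))
    + theta Lam y beta r true (x i) - theta Lam y beta r false (x i)).
Proof. by rewrite /phi Pn_subr // addrC subrK. Qed.

Lemma psi_osE :
  psi_os Lam x a y s pi beta =
  \sum_i \sum_j Cmx x a s pi beta i j *: Lam (x i) (y j).
Proof.
rewrite /psi_os (one_step_foldE true) (one_step_foldE false).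
rewrite (@cross_fit_average _ _ _ s (fun r i =>
  ipw pi r (a i) (x i) *: (Lam (x i) (y i) - theta Lam y beta r (a i) (x i))
  + theta Lam y beta r true (x i) - theta Lam y beta r false (x i))).
by apply: eq_bigr => i _; rewrite Cmx_row_sum.
Qed.

End Estimators.

Theorem lemmaH1 (R : realFieldType) (H : lmodType R) (X Y : Type) (n : nat)
  (Lam : X -> Y -> H) (x : 'I_n -> X) (a : 'I_n -> bool) (y : 'I_n -> Y)
  (s : 'I_n -> bool) (pi : bool -> X -> R)
  (beta : bool -> bool -> X -> 'I_n -> R)
  (Hn : forall r : bool, (0 < nfold s r)%N)
  (Hpi : forall (r : bool) (z : X), 0 < pi r z < 1)
  (Hbeta : forall (r b : bool) (z : X) (j : 'I_n),
      (s j != r) || (a j != b) -> beta r b z j = 0) :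
  psi_cf Lam x y s beta =
    \sum_(i < n) \sum_(j < n) Emx x s beta i j *: Lam (x i) (y j)
  /\
  psi_os Lam x a y s pi beta =
    \sum_(i < n) \sum_(j < n) Cmx x a s pi beta i j *: Lam (x i) (y j).
Proof.
have beta_fold_support r b z j : s j != r -> beta r b z j = 0.
  by move=> sj_r; apply: Hbeta; rewrite sj_r.
by split; [exact: psi_cfE | exact: psi_osE].
Qed.
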